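(* Let $(G_1,\prec_1)$ and $(G_2,\prec_2)$ be POP-graphs such that the number of output edges of $G_1$ equals the number of input edges of $G_2$. Then $\prec_2\circ\prec_1$ is a planar order on $G_2\circ G_1$.
   Context: A progressive graph is a finite directed acyclic graph (parallel edges allowed) in which every source and every sink has degree one; degree-one vertices are boundary vertices. An input edge is an edge whose initial vertex is a boundary vertex; an output edge one whose terminal vertex is a boundary vertex. For edges write $e\to e'$ if $e\neq e'$ and there is a directed path whose first edge is $e$ and last edge is $e'$. A planar order on $G$ is a linear order $\prec$ on $E(G)$ such that (P1) $e_1\to e_2$ implies $e_1\prec e_2$; (P2) if $e_1\prec e_2\prec e_3$ and $e_1\to e_3$ then $e_1\to e_2$ or $e_2\to e_3$. A POP-graph is a progressive graph with a planar order. Composition: let $(G_1,\prec_1)$, $(G_2,\prec_2)$ be POP-graphs, $G_1$ with output edges $o_1\prec_1\cdots\prec_1 o_n$ and $G_2$ with input edges $i_1\prec_2\cdots\prec_2 i_n$. The progressive graph $G_2\circ G_1$ is obtained from $G_1\sqcup G_2$ by deleting the sinks of $G_1$, the sources of $G_2$ and the edges $o_k,i_k$, and adding for each $k$ a new edge $\overline{e_k}$ from the initial vertex of $o_k$ to the terminal vertex of $i_k$. Let $Q_1=\{e\in E(G_1): e\prec_1 o_1\}$, $Q_k=\{e: o_{k-1}\prec_1 e\prec_1 o_k\}$ ($2\le k\le n$), $P_k=\{e\in E(G_2): i_k\prec_2 e\prec_2 i_{k+1}\}$ ($1\le k\le n-1$), $P_n=\{e: i_n\prec_2 e\}$. The composition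 $\prec_2\circ\prec_1$ is the linear order on $E(G_2\circ G_1)$ listing $Q_1,\{\overline{e_1}\},P_1,Q_2,\{\overline{e_2}\},P_2,\dots,Q_n,\{\overline{e_n}\},P_n$ consecutively, each $Q_k$ ordered by $\prec_1$ and each $P_k$ by $\prec_2$. *)

From HB Require Import structures.
From mathcomp Require Import all_boot.
Set Implicit Arguments. Unset Strict Implicit. Unset Printing Implicit Defensive.

Record graph := Graph { V : finType; E : finType; src : E -> V; tgt : E -> V }.

Definition indeg (G : graph) (v : V G) := #|[pred e : E G | tgt e == v]|.
Definition outdeg (G : graph) (v : V G) := #|[pred e : E G | src e == v]|.
Definition deg (G : graph) (v : V G) := indeg v + outdeg v.
Definition is_source (G : graph) (v : V G) := indeg v == 0.
Definition is_sink (G : graph) (v : V G) := outdeg v == 0.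
Definition is_boundary (G : graph) (v : V G) := deg v == 1.
Definition is_input (G : graph) (e : E G) := is_boundary (src e).
Definition is_output (G : graph) (e : E G) := is_boundary (tgt e).

Definition adj (G : graph) : rel (E G) := fun e f => tgt e == src f.
Definition arrow (G : graph) (e f : E G) := (e != f) && connect (@adj G) e f.
Definition acyclic (G : graph) := forall e f : E G, adj e f -> ~~ connect (@adj G) f e.
Definition progressive (G : graph) :=
  acyclic G /\ forall v : V G, is_source v || is_sink v -> deg v = 1.

(* A linear order on E(G) is represented by the list of edges in increasing order. *)
Definition lin_order (G : graph) (s : seq (E G)) := uniq s /\ forall e, e \in s.
Definition prec (T : eqType) (s : seq T) (e f : T) := index e s < index f s.
Definition planar_order (G : graph) (s : seq (E G)) :=
  [/\ lin_order s,
      (forall e1 e2, arrow e1 e2 -> prec s e1 e2) &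
      (forall e1 e2 e3, prec s e1 e2 -> prec s e2 e3 -> arrow e1 e3 ->
          arrow e1 e2 \/ arrow e2 e3)].
Definition POP (G : graph) (s : seq (E G)) := progressive G /\ planar_order s.

Definition outs (G : graph) (s : seq (E G)) := [seq e <- s | is_output e].
Definition ins (G : graph) (s : seq (E G)) := [seq e <- s | is_input e].

Lemma src_not_sink (G : graph) (e : E G) : ~~ is_sink (src e).
Proof. by rewrite /is_sink /outdeg -lt0n; apply/card_gt0P; exists e; rewrite inE. Qed.
Lemma tgt_not_source (G : graph) (e : E G) : ~~ is_source (tgt e).
Proof. by rewrite /is_source /indeg -lt0n; apply/card_gt0P; exists e; rewrite inE. Qed.

Section Composition.
Variables (G1 G2 : graph) (s1 : seq (E G1)) (s2 : seq (E G2)).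
Variable (Heq : size (outs s1) = size (ins s2)).
Local Notation n := (size (outs s1)).

Definition keepv (x : (V G1 + V G2)%type) : bool :=
  match x with
  | inl v => ~~ (is_boundary v && is_sink v)
  | inr v => ~~ (is_boundary v && is_source v)
  end.

Definition compV : finType := {x : (V G1 + V G2)%type | keepv x}.
Definition compE : finType :=
  (({e : E G1 | ~~ is_output e} + {e : E G2 | ~~ is_input e}) + 'I_n)%type.

Definition o_ (k : 'I_n) : E G1 := tnth (in_tuple (outs s1)) k.
Definition i_ (k : 'I_n) : E G2 := tnth (in_tuple (ins s2)) (cast_ord Heq k).

Lemma keep_src1 (e : E G1) : keepv (inl (src e)).
Proof. by rewrite /= (negbTE (src_not_sink e)) andbF. Qed.
Lemma keep_tgt2 (e : E G2) : keepv (inr (tgt e)).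
Proof. by rewrite /= (negbTE (tgt_not_source e)) andbF. Qed.
Lemma keep_tgt1 (e : E G1) : ~~ is_output e -> keepv (inl (tgt e)).
Proof. by move=> h; apply/negP => /andP [hb _]; exact: (negP h hb). Qed.
Lemma keep_src2 (e : E G2) : ~~ is_input e -> keepv (inr (src e)).
Proof. by move=> h; apply/negP => /andP [hb _]; exact: (negP h hb). Qed.

Definition comp_src (x : compE) : compV :=
  match x with
  | inl (inl e) => exist _ (inl (src (val e))) (keep_src1 (val e))
  | inl (inr e) => exist _ (inr (src (val e))) (keep_src2 (valP e))
  | inr k => exist _ (inl (src (o_ k))) (keep_src1 (o_ k))
  end.
Definition comp_tgt (x : compE) : compV :=
  match x with
  | inl (inl e) => exist _ (inl (tgt (val e))) (keep_tgt1 (valP e))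
  | inl (inr e) => exist _ (inr (tgt (val e))) (keep_tgt2 (val e))
  | inr k => exist _ (inr (tgt (i_ k))) (keep_tgt2 (i_ k))
  end.

(* the progressive graph G2 o G1; the new edge \bar{e_k} is [inr k] *)
Definition compose : graph := @Graph compV compE comp_src comp_tgt.

(* Q_k : edges strictly between o_{k-1} and o_k (before o_1 for the first) *)
Definition Qk (k : 'I_n) : seq (E G1) :=
  [seq e <- s1 | ((k == 0 :> nat) || prec s1 (nth (o_ k) (outs s1) k.-1) e)
                 && prec s1 e (o_ k)].
(* P_k : edges strictly between i_k and i_{k+1} (after i_n for the last) *)
Definition Pk (k : 'I_n) : seq (E G2) :=
  [seq e <- s2 | prec s2 (i_ k) e
                 && ((n <= k.+1) || prec s2 e (nth (i_ k) (ins s2) k.+1))].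

Definition emb1 (e : E G1) : option (E compose) :=
  omap (fun x => inl (inl x)) (insub e : option {e : E G1 | ~~ is_output e}).
Definition emb2 (e : E G2) : option (E compose) :=
  omap (fun x => inl (inr x)) (insub e : option {e : E G2 | ~~ is_input e}).

Definition comp_order : seq (E compose) :=
  flatten [seq pmap emb1 (Qk k) ++ (inr k : E compose) :: pmap emb2 (Pk k)
          | k <- enum 'I_n].
End Composition.

From mathcomp Require Import all_boot zify.
Set Implicit Arguments. Unset Strict Implicit. Unset Printing Implicit Defensive.

(* A directed path of G2 o G1 either stays in G1, stays in G2, or passes from
   G1 to G2 through exactly one new edge e_k; so its arrows are those of G1 and
   G2 (with e_k read as o_k, resp. i_k) together with e -> f whenever e -> o_k in
   G1 and i_k -> f in G2.  Likewise the composite order restricted to G1 (resp.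
   G2) is the order of G1 (resp. G2).  The link between the two pieces is the
   position of old edges: by (P2), an edge of G1 that is not an output reaches
   the first output after it, and dually for inputs of G2.  Properties (P1) and
   (P2) of the composite then follow from those of the factors, using that an
   output has no successor and an input no predecessor. *)

Definition count_before (T : eqType) (p : pred T) (s : seq T) (x : T) :=
  count p (take (index x s) s).

Section CountBefore.
Variables (T : eqType) (p : pred T) (s : seq T).

Lemma count_take_mono i j : i <= j -> count p (take i s) <= count p (take j s).
Proof. by move=> le_ij; rewrite -(subnKC le_ij) takeD count_cat leq_addr. Qed.

Lemma count_before_le x : count_before p s x <= count p s.
Proof.
by rewrite /count_before -[in X in _ <= X](cat_take_drop (index x s) s) count_cat leq_addr.
Qed.

Hypothesis s_uniq : uniq s.

Lemma count_before_nth_filter x0 j :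
  j < count p s -> count_before p s (nth x0 (filter p s) j) = j.
Proof.
rewrite /count_before; elim: s s_uniq j => [|a s' IH] //= /andP[a_s' uniq_s'] j.
have nth_filterP j' : j' < count p s' ->
    p (nth x0 (filter p s') j') /\ nth x0 (filter p s') j' \in s'.
  by move=> lt_j'; apply/andP; rewrite -mem_filter mem_nth ?size_filter.
case pa: (p a) => /= lt_j.
  case: j lt_j => [|j] lt_j /=; first by rewrite eqxx take0.
  have [_ in_s'] := nth_filterP j lt_j.
  have a_neq : a != nth x0 (filter p s') j by apply: contraNneq a_s' => ->.
  by rewrite (negbTE a_neq) /= pa IH.
have [p_nth _] := nth_filterP j lt_j.
have a_neq : a != nth x0 (filter p s') j by apply: contraFneq pa => ->.
by rewrite (negbTE a_neq) /= pa IH.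
Qed.

Lemma prec_nth_filter_l x0 j x : j < count p s ->
  prec s (nth x0 (filter p s) j) x = (j < count_before p s x).
Proof.
move=> lt_j; rewrite /prec; set o := nth x0 (filter p s) j.
have [p_o o_in] : p o /\ o \in s by apply/andP; rewrite -mem_filter mem_nth ?size_filter.
have o_rank : count_before p s o = j by exact: count_before_nth_filter.
case: (leqP (index x s) (index o s)) => [le_xo|lt_ox].
  by apply/esym/negbTE; rewrite -leqNgt -o_rank count_take_mono.
apply/esym; rewrite -o_rank; apply: leq_trans (count_take_mono lt_ox).
by rewrite (take_nth o) ?index_mem // -cats1 count_cat nth_index //= p_o addn1.
Qed.

Lemma prec_nth_filter_r x0 j x : x \in s -> ~~ p x -> j < count p s ->
  prec s x (nth x0 (filter p s) j) = (count_before p s x <= j).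
Proof.
move=> x_in not_px lt_j; rewrite leqNgt -(prec_nth_filter_l x0) // /prec.
set o := nth x0 _ j.
have [p_o o_in] : p o /\ o \in s by apply/andP; rewrite -mem_filter mem_nth ?size_filter.
have : index x s != index o s.
  apply: contraNneq not_px => /(congr1 (nth x0 s)).
  by rewrite !nth_index // => ->.
by case: ltngtP.
Qed.

Lemma count_before_lex x y :
  (count_before p s x < count_before p s y)
    || (count_before p s x == count_before p s y) && (index x s < index y s)
  = (index x s < index y s).
Proof.
rewrite /count_before; case: (ltngtP (index x s) (index y s)) => [lt_xy|lt_yx|->].
- by rewrite andbT orbC -leq_eqVlt count_take_mono // ltnW.
- by rewrite andbF orbF ltnNge count_take_mono // ltnW.
- by rewrite ltnn andbF.
Qed.

Lemma prec_nth_filter x0 i j : i < count p s -> j < count p s ->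
  prec s (nth x0 (filter p s) i) (nth x0 (filter p s) j) = (i < j).
Proof. by move=> lt_i lt_j; rewrite prec_nth_filter_l // count_before_nth_filter. Qed.
End CountBefore.

Lemma ltn_muladd_lex a b r r' m : r < m -> r' < m ->
  (a * m + r < b * m + r') = (a < b) || (a == b) && (r < r').
Proof.
move=> lt_r lt_r'; case: (ltngtP a b) => [lt_ab|lt_ba|<-] /=.
- by apply/idP; nia.
- by apply/negbTE; rewrite -leqNgt; nia.
- by rewrite ltn_add2l.
Qed.

Lemma index_ltn_pairwise (T : eqType) (key : T -> nat) (s : seq T) :
  pairwise (relpre key ltn) s ->
  {in s &, forall x y, (index x s < index y s) = (key x < key y)}.
Proof.
move=> /(pairwiseP _) key_lt x y x_in y_in.
have ix : index x s < size s by rewrite index_mem.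
have iy : index y s < size s by rewrite index_mem.
case: (ltngtP (index x s) (index y s)) => [lt_xy|lt_yx|eq_xy].
- by have := key_lt x _ _ ix iy lt_xy; rewrite /= !nth_index.
- have := key_lt x _ _ iy ix lt_yx; rewrite /= !nth_index // => lt_key.
  by apply/esym/negbTE; rewrite -leqNgt ltnW.
- by move/(congr1 (nth x s)): eq_xy; rewrite !nth_index // => ->; rewrite ltnn.
Qed.

Lemma pairwise_pmap (aT rT : eqType) (f : aT -> option rT) (r : rel rT) (ra : rel aT)
    (s : seq aT) :
  (forall a b x y, f a = Some x -> f b = Some y -> ra a b -> r x y) ->
  pairwise ra s -> pairwise r (pmap f s).
Proof.
move=> f_hom; elim: s => //= a s IH /andP[ra_a ra_s].
case fa: (f a) => [x|] /=; last exact: IH.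
rewrite IH // andbT; apply/allP => y; rewrite mem_pmap => /mapP[b b_s fb].
exact: f_hom fa (esym fb) (allP ra_a b b_s).
Qed.

Lemma pairwise_index (T : eqType) (s : seq T) : uniq s -> pairwise (relpre (index^~ s) ltn) s.
Proof.
case: s => [//|x0 s'] uniq_s; apply/(pairwiseP x0) => i j lt_i lt_j lt_ij.
by rewrite -(index_uniq x0 lt_i uniq_s) -(index_uniq x0 lt_j uniq_s) in lt_ij.
Qed.

Lemma pairwise_flatten_blocks (I T : eqType) (key : T -> nat) (m : nat) (F : I -> seq T)
    (blk : I -> nat) (l : seq I) :
  pairwise (relpre blk ltn) l -> (forall i, pairwise (relpre key ltn) (F i)) ->
  (forall i x, x \in F i -> blk i * m <= key x < (blk i).+1 * m) ->
  pairwise (relpre key ltn) (flatten (map F l)).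
Proof.
move=> blk_lt key_lt key_in; elim: l blk_lt => //= a l IH /andP[blk_a blk_l].
rewrite pairwise_cat key_lt IH //= andbT.
apply/allrelP => x y x_in /flattenP[_ /mapP[b b_l ->] y_in].
have := key_in a x x_in; have := key_in b y y_in.
have : (blk a).+1 * m <= blk b * m by rewrite leq_mul2r (allP blk_a b b_l : blk a < blk b) orbT.
rewrite /=; lia.
Qed.

Lemma exists_connect_terminal (T : finType) (r : rel T) :
    (forall x y, r x y -> ~~ connect r y x) ->
  forall x, exists2 y, connect r x y & forall z, ~~ r y z.
Proof.
move=> r_acyclic x.
have [y xy y_min] := arg_minnP (fun y => #|[pred z | connect r y z]|) (connect0 r x).
exists y => // z; apply/negP => yz.
have := y_min z (connect_trans xy (connect1 yz)); rewrite leqNgt => /negP; apply.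
apply: proper_card; apply/properP; split.
  by apply/subsetP => w; rewrite !inE; apply: connect_trans (connect1 yz).
by exists y; rewrite !inE ?connect0 //; apply: r_acyclic.
Qed.

Lemma exists_connect_initial (T : finType) (r : rel T) :
    (forall x y, r x y -> ~~ connect r y x) ->
  forall x, exists2 y, connect r y x & forall z, ~~ r z y.
Proof.
move=> r_acyclic x; have rV_acyclic u v : [rel a b | r b a] u v -> ~~ connect [rel a b | r b a] v u.
  by move=> /= vu; rewrite connect_rev /=; apply: r_acyclic.
have [y xy y_initial] := exists_connect_terminal rV_acyclic x.
by exists y => //; rewrite connect_rev in xy.
Qed.

Section BoundaryEdges.
Variable G : graph.
Implicit Types e f : E G.

Lemma adj_not_output e f : adj e f -> ~~ is_output e.
Proof.
rewrite /adj /is_output /is_boundary /deg => /eqP tgt_e.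
have : 0 < indeg (tgt e) by apply/card_gt0P; exists e; rewrite inE.
have : 0 < outdeg (tgt e) by apply/card_gt0P; exists f; rewrite inE tgt_e.
by move=> ? ?; apply/eqP; lia.
Qed.

Lemma adj_not_input e f : adj e f -> ~~ is_input f.
Proof.
rewrite /adj /is_input /is_boundary /deg => /eqP tgt_e.
have : 0 < indeg (src f) by apply/card_gt0P; exists e; rewrite inE tgt_e.
have : 0 < outdeg (src f) by apply/card_gt0P; exists f; rewrite inE.
by move=> ? ?; apply/eqP; lia.
Qed.

Lemma connect_from_output o f : is_output o -> connect (@adj G) o f -> f = o.
Proof.
move=> out_o /connectP[[|g p] /=]; first by move=> _ ->.
by case/andP=> /adj_not_output; rewrite out_o.
Qed.

Lemma connect_to_input i f : is_input i -> connect (@adj G) f i -> i = f.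
Proof.
move=> in_i /connectP[p]; case/lastP: p => [|p g] /=; first by move=> _ ->.
by rewrite rcons_path last_rcons => /andP[_ /adj_not_input] + eq_ig; rewrite -eq_ig in_i.
Qed.

Lemma arrow_outputF o f : is_output o -> arrow o f = false.
Proof.
move=> out_o; apply/negbTE/andP => -[/eqP neq_of /(connect_from_output out_o) eq_fo].
by apply: neq_of.
Qed.

Lemma arrow_inputF i f : is_input i -> arrow f i = false.
Proof.
move=> in_i; apply/negbTE/andP => -[/eqP neq_fi /(connect_to_input in_i) eq_if].
by apply: neq_fi.
Qed.

Hypothesis G_progressive : progressive G.

Lemma exists_arrow_output e : ~~ is_output e -> exists2 o, is_output o & arrow e o.
Proof.
case: G_progressive => G_acyclic deg_boundary not_out_e.
have [o eo o_terminal] := exists_connect_terminal G_acyclic e.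
have out_o : is_output o.
  apply/eqP/deg_boundary; rewrite /is_sink /outdeg; apply/orP; right.
  by apply/eqP/eq_card0 => g; rewrite !inE; apply: contraNF (o_terminal g); rewrite /adj eq_sym.
by exists o => //; rewrite /arrow eo andbT; apply: contraNneq not_out_e => ->.
Qed.

Lemma exists_arrow_input f : ~~ is_input f -> exists2 i, is_input i & arrow i f.
Proof.
case: G_progressive => G_acyclic deg_boundary not_in_f.
have [i i_f i_initial] := exists_connect_initial G_acyclic f.
have in_i : is_input i.
  apply/eqP/deg_boundary; rewrite /is_source /indeg; apply/orP; left.
  by apply/eqP/eq_card0 => g; rewrite !inE; apply: contraNF (i_initial g); rewrite /adj.
by exists i => //; rewrite /arrow i_f andbT; apply: contraNneq not_in_f => <-.
Qed.
End BoundaryEdges.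

Definition outs_before (G : graph) (s : seq (E G)) (e : E G) :=
  count_before (fun f => is_output f) s e.
Definition ins_before (G : graph) (s : seq (E G)) (e : E G) :=
  count_before (fun f => is_input f) s e.

Section PlanarOrder.
Variables (G : graph) (s : seq (E G)).
Hypothesis s_POP : POP s.

Lemma POP_uniq : uniq s. Proof. by case: s_POP => _ [[]]. Qed.
Lemma POP_mem e : e \in s. Proof. by case: s_POP => _ [[_ ->]]. Qed.
Lemma POP_arrow_prec e f : arrow e f -> prec s e f.
Proof. by case: s_POP => _ [_ arrow_prec _]; apply: arrow_prec. Qed.
Lemma POP_planar e1 e2 e3 : prec s e1 e2 -> prec s e2 e3 -> arrow e1 e3 ->
  arrow e1 e2 \/ arrow e2 e3.
Proof. by case: s_POP => _ [_ _ planar]; apply: planar. Qed.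

Lemma planar_arrow_via_output a o c : prec s a o -> prec s o c -> is_output o ->
  arrow a c -> arrow a o.
Proof. by move=> ao oc out_o /(POP_planar ao oc) [//|]; rewrite arrow_outputF. Qed.

Lemma planar_arrow_via_input a i c : prec s a i -> prec s i c -> is_input i ->
  arrow a c -> arrow i c.
Proof. by move=> ai ic in_i /(POP_planar ai ic) [|//]; rewrite arrow_inputF. Qed.

Lemma arrow_next_output e : ~~ is_output e ->
  outs_before s e < size (outs s) /\ arrow e (nth e (outs s) (outs_before s e)).
Proof.
move=> not_out_e; have [o out_o e_o] := exists_arrow_output (proj1 s_POP) not_out_e.
have o_outs : o \in outs s by rewrite mem_filter out_o POP_mem.
have m_lt : index o (outs s) < count (fun f => is_output f) s by rewrite -size_filter index_mem.
have o_nth : nth e (outs s) (index o (outs s)) = o by rewrite nth_index.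
have := POP_arrow_prec e_o; rewrite -[in prec _ _ o]o_nth.
rewrite prec_nth_filter_r ?POP_uniq ?POP_mem // -/(outs_before s e) leq_eqVlt.
case/orP=> [/eqP-> | lt_m]; first by rewrite o_nth size_filter.
split; first by rewrite size_filter (ltn_trans lt_m).
apply: (planar_arrow_via_output _ _ _ e_o).
- by rewrite prec_nth_filter_r ?POP_uniq ?POP_mem // (ltn_trans lt_m).
- by rewrite -[in prec _ _ o]o_nth prec_nth_filter ?POP_uniq // (ltn_trans lt_m).
- by apply: (allP (filter_all _ s)); rewrite mem_nth // size_filter (ltn_trans lt_m).
Qed.

Lemma arrow_prev_input e : ~~ is_input e ->
  0 < ins_before s e /\ arrow (nth e (ins s) (ins_before s e).-1) e.
Proof.
move=> not_in_e; have [i in_i i_e] := exists_arrow_input (proj1 s_POP) not_in_e.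
have i_ins : i \in ins s by rewrite mem_filter in_i POP_mem.
have m_lt : index i (ins s) < count (fun f => is_input f) s by rewrite -size_filter index_mem.
have i_nth : nth e (ins s) (index i (ins s)) = i by rewrite nth_index.
have := POP_arrow_prec i_e; rewrite -[in prec _ i _]i_nth.
rewrite prec_nth_filter_l ?POP_uniq // -/(ins_before s e) => lt_m.
have le_m : index i (ins s) <= (ins_before s e).-1 by rewrite -ltnS (ltn_predK lt_m).
split; first exact: leq_ltn_trans lt_m.
have lt_j : (ins_before s e).-1 < count (fun f => is_input f) s.
  by rewrite (leq_trans _ (count_before_le _ _ e)) // (ltn_predK lt_m).
move: le_m; rewrite leq_eqVlt => /orP[/eqP<- | lt_mj]; first by rewrite i_nth.
apply: (planar_arrow_via_input _ _ _ i_e).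
- by rewrite -[in prec _ i _]i_nth prec_nth_filter ?POP_uniq.
- by rewrite prec_nth_filter_l ?POP_uniq // (ltn_predK lt_m).
- by apply: (allP (filter_all _ s)); rewrite mem_nth // size_filter.
Qed.
End PlanarOrder.

Section Composition.
Variables (G1 G2 : graph) (s1 : seq (E G1)) (s2 : seq (E G2)).
Hypotheses (s1_POP : POP s1) (s2_POP : POP s2).
Variable Heq : size (outs s1) = size (ins s2).
Local Notation n := (size (outs s1)).
Local Notation G := (compose Heq).
Local Notation i_ := (i_ Heq).
Implicit Types j k : 'I_n.

Lemma o_nth d (k : 'I_n) : o_ k = nth d (outs s1) k.
Proof. exact: tnth_nth. Qed.
Lemma i_nth d (k : 'I_n) : i_ k = nth d (ins s2) k.
Proof. exact: tnth_nth. Qed.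

Lemma count_outs : count (fun e => is_output e) s1 = n. Proof. by rewrite size_filter. Qed.
Lemma count_ins : count (fun e => is_input e) s2 = n. Proof. by rewrite Heq size_filter. Qed.

Lemma o_output k : is_output (o_ k).
Proof. by rewrite (o_nth (o_ k)); apply: (allP (filter_all _ s1)); rewrite mem_nth. Qed.
Lemma i_input k : is_input (i_ k).
Proof. by rewrite (i_nth (i_ k)); apply: (allP (filter_all _ s2)); rewrite mem_nth -?Heq. Qed.

Lemma o_inj : injective (@o_ G1 s1).
Proof. by apply/tuple_uniqP; rewrite filter_uniq ?(POP_uniq s1_POP). Qed.
Lemma i_inj : injective i_.
Proof.
have tnth_inj : injective (tnth (in_tuple (ins s2))).
  by apply/tuple_uniqP; rewrite filter_uniq ?(POP_uniq s2_POP).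
by move=> j k /tnth_inj /cast_ord_inj.
Qed.

Lemma output_is_o o : is_output o -> exists k, o = o_ k.
Proof.
move=> out_o; have o_outs : o \in outs s1 by rewrite mem_filter out_o (POP_mem s1_POP).
have lt_o : index o (outs s1) < n by rewrite index_mem.
by exists (Ordinal lt_o); rewrite (o_nth o) nth_index.
Qed.
Lemma input_is_i i : is_input i -> exists k, i = i_ k.
Proof.
move=> in_i; have i_ins : i \in ins s2 by rewrite mem_filter in_i (POP_mem s2_POP).
have lt_i : index i (ins s2) < n by rewrite Heq index_mem.
by exists (Ordinal lt_i); rewrite (i_nth i) nth_index.
Qed.

Lemma prec_o_l k e : prec s1 (o_ k) e = (k < outs_before s1 e).
Proof. by rewrite (o_nth e) prec_nth_filter_l ?(POP_uniq s1_POP) ?count_outs. Qed.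
Lemma prec_o_r k e : ~~ is_output e -> prec s1 e (o_ k) = (outs_before s1 e <= k).
Proof.
move=> not_out_e.
by rewrite (o_nth e) prec_nth_filter_r ?(POP_uniq s1_POP) ?(POP_mem s1_POP) ?count_outs.
Qed.
Lemma prec_o j k : prec s1 (o_ j) (o_ k) = (j < k).
Proof.
rewrite prec_o_l [o_ k](o_nth (o_ k)) /outs_before.
by rewrite count_before_nth_filter ?(POP_uniq s1_POP) ?count_outs.
Qed.

Lemma prec_i_l k f : prec s2 (i_ k) f = (k < ins_before s2 f).
Proof. by rewrite (i_nth f) prec_nth_filter_l ?(POP_uniq s2_POP) ?count_ins. Qed.
Lemma prec_i_r k f : ~~ is_input f -> prec s2 f (i_ k) = (ins_before s2 f <= k).
Proof.
move=> not_in_f.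
by rewrite (i_nth f) prec_nth_filter_r ?(POP_uniq s2_POP) ?(POP_mem s2_POP) ?count_ins.
Qed.
Lemma prec_i j k : prec s2 (i_ j) (i_ k) = (j < k).
Proof.
rewrite prec_i_l [i_ k](i_nth (i_ k)) /ins_before.
by rewrite count_before_nth_filter ?(POP_uniq s2_POP) ?count_ins.
Qed.

Lemma ins_before_le f : ins_before s2 f <= n.
Proof. by rewrite -count_ins count_before_le. Qed.

Lemma arrow_next_o e : ~~ is_output e ->
  exists2 k : 'I_n, k = outs_before s1 e :> nat & arrow e (o_ k).
Proof.
move=> /(arrow_next_output s1_POP) [lt_e arrow_e].
by exists (Ordinal lt_e); rewrite // (o_nth e).
Qed.

Lemma arrow_prev_i f : ~~ is_input f ->
  exists2 k : 'I_n, ins_before s2 f = k.+1 & arrow (i_ k) f.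
Proof.
move=> /(arrow_prev_input s2_POP) [gt0_f arrow_f].
have lt_f : (ins_before s2 f).-1 < n by rewrite prednK ?ins_before_le.
by exists (Ordinal lt_f); rewrite /= ?prednK // (i_nth f).
Qed.

Local Notation E1 := {e : E G1 | ~~ is_output e}.
Local Notation E2 := {e : E G2 | ~~ is_input e}.
Local Notation old1 u := (inl (inl u) : E G).
Local Notation old2 v := (inl (inr v) : E G).
Local Notation new k := (inr k : E G).
Implicit Types (u : E1) (v : E2).

Definition edge1 (x : E G) : option (E G1) :=
  match x with inl (inl u) => Some (val u) | inl (inr _) => None | inr k => Some (o_ k) end.
Definition edge2 (x : E G) : option (E G2) :=
  match x with inl (inl _) => None | inl (inr v) => Some (val v) | inr k => Some (i_ k) end.

Lemma adjE (x y : E G) : adj x y =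
  match x, y with
  | inl (inl u), inl (inl u') => adj (val u) (val u')
  | inl (inl u), inr k => adj (val u) (o_ k)
  | inr k, inl (inr v) => adj (i_ k) (val v)
  | inl (inr v), inl (inr v') => adj (val v) (val v')
  | _, _ => false
  end.
Proof. by case: x => [[u|v]|k]; case: y => [[u'|v']|k']. Qed.

Definition composite_path (x y : E G) :=
  [\/ exists a b, [/\ edge1 x = Some a, edge1 y = Some b & connect (@adj G1) a b],
      exists a b, [/\ edge2 x = Some a, edge2 y = Some b & connect (@adj G2) a b] |
      exists a b k, [/\ edge1 x = Some a, edge2 y = Some b,
         connect (@adj G1) a (o_ k) & connect (@adj G2) (i_ k) b]].

Lemma composite_path_refl x : composite_path x x.
Proof.
case: x => [[u|v]|k].
- by apply: Or31; exists (val u), (val u).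
- by apply: Or32; exists (val v), (val v).
- by apply: Or31; exists (o_ k), (o_ k).
Qed.

Lemma composite_path_adj x y z : composite_path x y -> adj y z -> composite_path x z.
Proof.
rewrite adjE; case: y => [[u|v]|k]; case: z => [[u'|v']|k'] //= xy yz;
  have yz' := connect1 yz.
- case: xy => [[a [_ [xa [<-] ab]]]|[? [? []//]]|[? [? [? []//]]]].
  by apply: Or31; exists a, (val u'); split => //; apply: connect_trans yz'.
- case: xy => [[a [_ [xa [<-] ab]]]|[? [? []//]]|[? [? [? []//]]]].
  by apply: Or31; exists a, (o_ k'); split => //; apply: connect_trans yz'.
- case: xy => [[? [? []//]]|[a [_ [xa [<-] ab]]]|[a [_ [m [xa [<-] am mb]]]]].
  + by apply: Or32; exists a, (val v'); split => //; apply: connect_trans yz'.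
  + by apply: Or33; exists a, (val v'), m; split => //; apply: connect_trans yz'.
- case: xy => [[a [_ [xa [<-] ab]]]|[a [_ [xa [<-] ab]]]|[a [_ [m [xa [<-] am mb]]]]].
  + by apply: Or33; exists a, (val v'), k.
  + by apply: Or32; exists a, (val v'); split => //; apply: connect_trans yz'.
  + by apply: Or33; exists a, (val v'), m; split => //; apply: connect_trans yz'.
Qed.

Lemma connect_composite_path x y : connect (@adj G) x y -> composite_path x y.
Proof.
move=> /connectP[p]; elim/last_ind: p y => [|p z IH] y /=.
  by move=> _ ->; apply: composite_path_refl.
rewrite rcons_path last_rcons => /andP[xp pz] ->.
exact: composite_path_adj (IH _ xp erefl) pz.
Qed.

Lemma edge1_surj a : exists x, edge1 x = Some a.
Proof.
case out_a: (is_output a); first by have [k ->] := output_is_o out_a; exists (new k).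
by exists (old1 (exist _ a (negbT out_a))).
Qed.
Lemma edge2_surj b : exists x, edge2 x = Some b.
Proof.
case in_b: (is_input b); first by have [k ->] := input_is_i in_b; exists (new k).
by exists (old2 (exist _ b (negbT in_b))).
Qed.

Lemma edge1_inj x y a : edge1 x = Some a -> edge1 y = Some a -> x = y.
Proof.
case: x => [[u|v]|k]; case: y => [[u'|v']|k'] //= [<-] [].
- by move/val_inj->.
- by move=> eq_u; move: (valP u); rewrite /= -eq_u o_output.
- by move=> eq_u; move: (valP u'); rewrite /= eq_u o_output.
- by move/o_inj->.
Qed.
Lemma edge2_inj x y b : edge2 x = Some b -> edge2 y = Some b -> x = y.
Proof.
case: x => [[u|v]|k]; case: y => [[u'|v']|k'] //= [<-] [].
- by move/val_inj->.
- by move=> eq_v; move: (valP v); rewrite /= -eq_v i_input.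
- by move=> eq_v; move: (valP v'); rewrite /= eq_v i_input.
- by move/i_inj->.
Qed.

Lemma adj_edge1 a c x y : adj a c -> edge1 x = Some a -> edge1 y = Some c -> adj x y.
Proof.
move=> ac; rewrite adjE.
case: x => [[u|v]|k]; case: y => [[u'|v']|k'] //= [ea] [ec]; subst a c => //;
  by move: (adj_not_output ac); rewrite o_output.
Qed.
Lemma adj_edge2 a c x y : adj a c -> edge2 x = Some a -> edge2 y = Some c -> adj x y.
Proof.
move=> ac; rewrite adjE.
case: x => [[u|v]|k]; case: y => [[u'|v']|k'] //= [ea] [ec]; subst a c => //;
  by move: (adj_not_input ac); rewrite i_input.
Qed.

Lemma connect_edge1 a b x y : connect (@adj G1) a b -> edge1 x = Some a -> edge1 y = Some b ->
  connect (@adj G) x y.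
Proof.
move=> /connectP[p ap ->{b}]; elim: p a x ap => [|c p IH] a x /=.
  by move=> _ xa ya; rewrite (edge1_inj xa ya) connect0.
case/andP=> ac cp xa ya; have [z zc] := edge1_surj c.
exact: connect_trans (connect1 (adj_edge1 ac xa zc)) (IH c z cp zc ya).
Qed.
Lemma connect_edge2 a b x y : connect (@adj G2) a b -> edge2 x = Some a -> edge2 y = Some b ->
  connect (@adj G) x y.
Proof.
move=> /connectP[p ap ->{b}]; elim: p a x ap => [|c p IH] a x /=.
  by move=> _ xa ya; rewrite (edge2_inj xa ya) connect0.
case/andP=> ac cp xa ya; have [z zc] := edge2_surj c.
exact: connect_trans (connect1 (adj_edge2 ac xa zc)) (IH c z cp zc ya).
Qed.

Lemma val_neq_o u k : val u != o_ k.
Proof. by apply: contraNneq (valP u) => ->; rewrite o_output. Qed.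
Lemma i_neq_val v k : i_ k != val v.
Proof. by apply: contraNneq (valP v) => <-; rewrite i_input. Qed.

Lemma arrow_old1 u u' : arrow (old1 u) (old1 u') = arrow (val u) (val u').
Proof.
rewrite /arrow; apply/andP/andP => -[neq_uu' uu']; split.
- by apply: contraNneq neq_uu' => /val_inj ->.
- by case: (connect_composite_path uu') => [[a [b [[<-] [<-] //]]]|[? [? []//]]|[? [? [? []//]]]].
- by apply: contraNneq neq_uu' => -[->].
- exact: connect_edge1 uu' _ _.
Qed.

Lemma arrow_old2 v v' : arrow (old2 v) (old2 v') = arrow (val v) (val v').
Proof.
rewrite /arrow; apply/andP/andP => -[neq_vv' vv']; split.
- by apply: contraNneq neq_vv' => /val_inj ->.
- by case: (connect_composite_path vv') => [[? [? []//]]|[a [b [[<-] [<-] //]]]|[? [? [? []//]]]].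
- by apply: contraNneq neq_vv' => -[->].
- exact: connect_edge2 vv' _ _.
Qed.

Lemma arrow_old1_new u k : arrow (old1 u) (new k) = arrow (val u) (o_ k).
Proof.
rewrite /arrow val_neq_o; apply/andP/idP => [[_ uk]|uk].
  2: by split; last exact: connect_edge1 uk _ _.
case: (connect_composite_path uk) => [[a [b [[<-] [<-] //]]]|[? [? []//]]|].
move=> [_ [_ [m [[<-] [<-] um /(connect_to_input (i_input k)) /i_inj km]]]].
by rewrite km.
Qed.

Lemma arrow_new_old2 k v : arrow (new k) (old2 v) = arrow (i_ k) (val v).
Proof.
rewrite /arrow i_neq_val; apply/andP/idP => [[_ kv]|kv].
  2: by split; last exact: connect_edge2 kv _ _.
case: (connect_composite_path kv) => [[? [? []//]]|[a [b [[<-] [<-] //]]]|].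
move=> [_ [_ [m [[<-] [<-] /(connect_from_output (o_output k)) /o_inj mk mv]]]].
by rewrite -mk.
Qed.

Lemma arrow_old1_old2 u v : arrow (old1 u) (old2 v) <->
  exists k, arrow (val u) (o_ k) /\ arrow (i_ k) (val v).
Proof.
rewrite /arrow; split => [/andP[_ uv] | [k [/andP[_ uk] /andP[_ kv]]]].
  case: (connect_composite_path uv) => [[? [? []//]]|[? [? []//]]|[a [b [k [[<-] [<-] uk kv]]]]].
  by exists k; rewrite uk kv val_neq_o i_neq_val.
apply/andP; split => //; apply: (connect_trans (y := new k)).
  exact: connect_edge1 uk _ _.
exact: connect_edge2 kv _ _.
Qed.

Lemma arrow_new_old1F k u : arrow (new k) (old1 u) = false.
Proof.
apply/negbTE/andP => -[_ /connect_composite_path].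
case=> [[_ [_ [[<-] [<-] /(connect_from_output (o_output k)) eq_u]]]|[? [? []//]]|].
  by move/eqP: (val_neq_o u k); apply.
by move=> [? [? [? []//]]].
Qed.

Lemma arrow_newF j k : arrow (new j) (new k) = false.
Proof.
apply/negbTE/andP => -[neq_jk /connect_composite_path].
have connect_o := connect_from_output (o_output j).
have connect_i := connect_to_input (i_input k).
case=> [[_ [_ [[<-] [<-] /connect_o /o_inj kj]]]|[_ [_ [[<-] [<-] /connect_i /i_inj kj]]]|].
- by move: neq_jk; rewrite kj eqxx.
- by move: neq_jk; rewrite kj eqxx.
move=> [_ [_ [m [[<-] [<-] /connect_o /o_inj mj /connect_i /i_inj km]]]].
by move: neq_jk; rewrite -mj km eqxx.
Qed.

Lemma arrow_old2_old1F v u : arrow (old2 v) (old1 u) = false.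
Proof.
apply/negbTE/andP => -[_ /connect_composite_path].
by case=> [[? [? []//]]|[? [? []//]]|[? [? [? []//]]]].
Qed.

Lemma arrow_old2_newF v k : arrow (old2 v) (new k) = false.
Proof.
apply/negbTE/andP => -[_ /connect_composite_path].
case=> [[? [? []//]]|[_ [_ [[<-] [<-] /(connect_to_input (i_input k)) eq_v]]]|[? [? [? []//]]]].
by move/eqP: (i_neq_val v k); apply.
Qed.

(* The position of an edge in comp_order: Q_k, e_k, P_k form block k (k >= 1),
   inside which the edges of Q_k come first in the order of s1, then e_k, then
   the edges of P_k in the order of s2. *)
Definition block (x : E G) : nat :=
  match x with
  | inl (inl u) => (outs_before s1 (val u)).+1
  | inl (inr v) => ins_before s2 (val v)
  | inr k => k.+1
  end.
Definition offset (x : E G) : nat :=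
  match x with
  | inl (inl u) => index (val u) s1
  | inl (inr v) => size s1 + (index (val v) s2).+1
  | inr k => size s1
  end.
Local Notation radix := (size s1 + size s2 + 1).
Definition key (x : E G) := block x * radix + offset x.

Lemma offset_lt x : offset x < radix.
Proof.
case: x => [[u|v]|k] /=; last lia.
- by apply: leq_ltn_trans (index_size _ _) _; rewrite addn1 ltnS leq_addr.
- have : index (sval v) s2 < size s2 by rewrite index_mem (POP_mem s2_POP).
  lia.
Qed.

Definition segment k := pmap (emb1 Heq) (Qk k) ++ new k :: pmap (emb2 Heq) (Pk Heq k).

Lemma emb1_val u : emb1 Heq (val u) = Some (old1 u).
Proof. by rewrite /emb1 valK. Qed.
Lemma emb2_val v : emb2 Heq (val v) = Some (old2 v).
Proof. by rewrite /emb2 valK. Qed.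

Lemma emb1_Some a x : emb1 Heq a = Some x -> exists2 u : E1, x = old1 u & val u = a.
Proof. by rewrite /emb1; case: insubP => [u _ <- [<-]|//]; exists u. Qed.
Lemma emb2_Some b x : emb2 Heq b = Some x -> exists2 v : E2, x = old2 v & val v = b.
Proof. by rewrite /emb2; case: insubP => [v _ <- [<-]|//]; exists v. Qed.

Lemma Qk_outs_before k e : e \in Qk k -> ~~ is_output e -> outs_before s1 e = k.
Proof.
move=> + not_out_e; rewrite mem_filter prec_o_r // => /andP[/andP[+ le_ek] _].
case: (posnP k) => [k0 _ | k_gt0]; first by move: le_ek; rewrite k0 leqn0 => /eqP.
have lt_k1 : k.-1 < count (fun f => is_output f) s1.
  by rewrite count_outs (leq_ltn_trans (leq_pred k)).
rewrite /= prec_nth_filter_l ?(POP_uniq s1_POP) // -/(outs_before s1 e).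
by move: le_ek; lia.
Qed.

Lemma Pk_ins_before k f : f \in Pk Heq k -> ~~ is_input f -> ins_before s2 f = k.+1.
Proof.
move=> + not_in_f; rewrite mem_filter prec_i_l => /andP[/andP[lt_kf +] _].
case: (leqP n k.+1) => [le_nk _ | lt_kn]; first by have := ins_before_le f; lia.
have lt_k1 : k.+1 < count (fun f => is_input f) s2 by rewrite count_ins.
rewrite /= prec_nth_filter_r ?(POP_uniq s2_POP) ?(POP_mem s2_POP) // -/(ins_before s2 f).
by move: lt_kf; lia.
Qed.

Lemma mem_Qk k e : ~~ is_output e -> outs_before s1 e = k -> e \in Qk k.
Proof.
move=> not_out_e ek; rewrite mem_filter (POP_mem s1_POP) prec_o_r // ek leqnn !andbT.
case: (posnP k) => [-> // | k_gt0]; apply/orP; right.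
have lt_k1 : k.-1 < count (fun f => is_output f) s1.
  by rewrite count_outs (leq_ltn_trans (leq_pred k)).
by rewrite prec_nth_filter_l ?(POP_uniq s1_POP) // -/(outs_before s1 e) ek prednK.
Qed.

Lemma mem_Pk k f : ~~ is_input f -> ins_before s2 f = k.+1 -> f \in Pk Heq k.
Proof.
move=> not_in_f fk.
rewrite mem_filter (POP_mem s2_POP) prec_i_l andbT; apply/andP; split; first lia.
case: (leqP n k.+1) => //= lt_kn.
have lt_k1 : k.+1 < count (fun f => is_input f) s2 by rewrite count_ins.
by rewrite prec_nth_filter_r ?(POP_uniq s2_POP) ?(POP_mem s2_POP) // -/(ins_before s2 f); lia.
Qed.

Lemma block_segment k x : x \in segment k -> block x = k.+1.
Proof.
rewrite mem_cat inE !mem_pmap.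
case/or3P=> [/mapP[e e_Q /esym/emb1_Some[u -> ue]] | /eqP-> //
            | /mapP[f f_P /esym/emb2_Some[v -> vf]]].
  by rewrite /= ue (Qk_outs_before e_Q) // -ue (valP u).
by rewrite /= vf (Pk_ins_before f_P) // -vf (valP v).
Qed.

Lemma segment_offset_sorted k : pairwise (relpre offset ltn) (segment k).
Proof.
have old1_lt x : x \in pmap (emb1 Heq) (Qk k) -> offset x < size s1.
  rewrite mem_pmap => /mapP[e _ /esym/emb1_Some[u -> _]] /=.
  by rewrite index_mem (POP_mem s1_POP).
have old2_gt x : x \in pmap (emb2 Heq) (Pk Heq k) -> size s1 < offset x.
  by rewrite mem_pmap => /mapP[f _ /esym/emb2_Some[v -> _]] /=; lia.
rewrite pairwise_cat /=; apply/and4P; split.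
- apply/allrelP => x y /old1_lt lt_x; rewrite inE => /orP[/eqP-> | /old2_gt] /=; lia.
- apply: pairwise_pmap (pairwise_filter _ (pairwise_index (POP_uniq s1_POP))).
  by move=> a b x y /emb1_Some[u -> <-] /emb1_Some[u' -> <-].
- by apply/allP => y /old2_gt.
- apply: pairwise_pmap (pairwise_filter _ (pairwise_index (POP_uniq s2_POP))).
  by move=> a b x y /emb2_Some[v -> <-] /emb2_Some[v' -> <-] /=; rewrite ltn_add2l.
Qed.

Lemma comp_order_sorted : pairwise (relpre key ltn) (comp_order Heq).
Proof.
apply: (pairwise_flatten_blocks (blk := fun k : 'I_n => k.+1) (m := radix)).
- have := iota_ltn_sorted 0 n.
  by rewrite -val_enum_ord (sorted_pairwise ltn_trans) pairwise_map.
- move=> k; rewrite -(eq_in_pairwise (r := relpre offset ltn) _ (allss (segment k))).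
    exact: segment_offset_sorted.
  by move=> x y /block_segment bx /block_segment b_y; rewrite /= /key bx b_y ltn_add2l.
- move=> k x /block_segment bx; rewrite /key bx leq_addr (mulSn k.+1) (addnC radix) ltn_add2l.
  exact: offset_lt.
Qed.

Lemma mem_segment x : exists k, x \in segment k.
Proof.
case: x => [[u|v]|k]; last by exists k; rewrite mem_cat mem_head orbT.
- have [k ku _] := arrow_next_o (valP u); exists k.
  have := map_f (emb1 Heq) (mem_Qk (valP u) (esym ku)).
  by rewrite mem_cat mem_pmap emb1_val => ->.
- have [k kv _] := arrow_prev_i (valP v); exists k.
  have := map_f (emb2 Heq) (mem_Pk (valP v) kv).
  by rewrite mem_cat inE !mem_pmap emb2_val => ->; rewrite !orbT.
Qed.

Lemma comp_order_mem x : x \in comp_order Heq.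
Proof.
have [k x_k] := mem_segment x.
by apply/flattenP; exists (segment k); rewrite ?map_f ?mem_enum.
Qed.

Lemma prec_compE x y : prec (comp_order Heq) x y =
  (block x < block y) || (block x == block y) && (offset x < offset y).
Proof.
rewrite /prec (index_ltn_pairwise comp_order_sorted) ?comp_order_mem //.
by rewrite /key ltn_muladd_lex ?offset_lt.
Qed.

Lemma arrow_edge1 x y a b : edge1 x = Some a -> edge1 y = Some b -> arrow x y = arrow a b.
Proof.
case: x => [[u|v]|j]; case: y => [[u'|v']|k] //= [<-] [<-].
- exact: arrow_old1.
- exact: arrow_old1_new.
- by rewrite arrow_new_old1F arrow_outputF ?o_output.
- by rewrite arrow_newF arrow_outputF ?o_output.
Qed.

Lemma arrow_edge2 x y a b : edge2 x = Some a -> edge2 y = Some b -> arrow x y = arrow a b.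
Proof.
case: x => [[u|v]|j]; case: y => [[u'|v']|k] //= [<-] [<-].
- exact: arrow_old2.
- by rewrite arrow_old2_newF arrow_inputF ?i_input.
- exact: arrow_new_old2.
- by rewrite arrow_newF arrow_inputF ?i_input.
Qed.

Lemma prec_edge1 x y a b : edge1 x = Some a -> edge1 y = Some b ->
  prec (comp_order Heq) x y = prec s1 a b.
Proof.
have idx_lt (e : E G1) : index e s1 < size s1 by rewrite index_mem (POP_mem s1_POP).
rewrite prec_compE; case: x => [[u|v]|j]; case: y => [[u'|v']|k] //= [<-] [<-].
- exact: count_before_lex.
- by rewrite prec_o_r ?(valP u) // idx_lt andbT orbC -leq_eqVlt.
- by rewrite prec_o_l [size s1 < _]ltnNge (ltnW (idx_lt _)) andbF orbF.
- by rewrite prec_o ltnn andbF orbF.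
Qed.

Lemma prec_edge2 x y a b : edge2 x = Some a -> edge2 y = Some b ->
  prec (comp_order Heq) x y = prec s2 a b.
Proof.
rewrite prec_compE; case: x => [[u|v]|j]; case: y => [[u'|v']|k] //= [<-] [<-].
- by rewrite ltn_add2l ltnS count_before_lex.
- by rewrite prec_i_r ?(valP v) // [_ + _ < _]ltnNge leq_addr andbF orbF.
- by rewrite prec_i_l addnS ltnS leq_addr andbT orbC -leq_eqVlt.
- by rewrite prec_i ltnn andbF orbF.
Qed.

Lemma prec_old1_old2 u v :
  prec (comp_order Heq) (old1 u) (old2 v) = (outs_before s1 (val u) < ins_before s2 (val v)).
Proof.
have idx_lt : index (val u) s1 < size s1 + (index (val v) s2).+1.
  by rewrite ltn_addr // index_mem (POP_mem s1_POP).
by rewrite prec_compE /= idx_lt andbT orbC -leq_eqVlt.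
Qed.

Lemma prec_old2_old1 v u :
  prec (comp_order Heq) (old2 v) (old1 u) = (ins_before s2 (val v) <= outs_before s1 (val u)).
Proof.
have idx_le : index (val u) s1 <= size s1 + (index (val v) s2).+1.
  by rewrite (leq_trans (index_size _ _)) ?leq_addr.
by rewrite prec_compE /= [_ + _ < _]ltnNge idx_le andbF orbF.
Qed.

Lemma arrow_prec_edge1 x y : edge1 x -> edge1 y -> arrow x y -> prec (comp_order Heq) x y.
Proof.
case xa: (edge1 x) => [a|] //; case yb: (edge1 y) => [b|] // _ _.
by rewrite (arrow_edge1 xa yb) (prec_edge1 xa yb); apply: POP_arrow_prec.
Qed.
Lemma arrow_prec_edge2 x y : edge2 x -> edge2 y -> arrow x y -> prec (comp_order Heq) x y.
Proof.
case xa: (edge2 x) => [a|] //; case yb: (edge2 y) => [b|] // _ _.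
by rewrite (arrow_edge2 xa yb) (prec_edge2 xa yb); apply: POP_arrow_prec.
Qed.

Lemma comp_arrow_prec x y : arrow x y -> prec (comp_order Heq) x y.
Proof.
case: x => [[u|v]|j]; case: y => [[u'|v']|k];
  try (by apply: arrow_prec_edge1); try (by apply: arrow_prec_edge2).
- move/arrow_old1_old2 => -[k [/(POP_arrow_prec s1_POP) uk /(POP_arrow_prec s2_POP) kv]].
  by move: uk kv; rewrite prec_old1_old2 prec_o_r ?(valP u) // prec_i_l; apply: leq_ltn_trans.
- by rewrite arrow_old2_old1F.
Qed.

Lemma arrow_compP x z : arrow x z ->
  [\/ exists u c, [/\ x = old1 u, edge1 z = Some c & arrow (val u) c],
      exists a v, [/\ edge2 x = Some a, z = old2 v & arrow a (val v)] |
      exists u v k, [/\ x = old1 u, z = old2 v, arrow (val u) (o_ k) & arrow (i_ k) (val v)]].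
Proof.
case: x => [[u|v]|j]; case: z => [[u'|v']|k];
  rewrite ?arrow_old2_old1F ?arrow_old2_newF ?arrow_new_old1F ?arrow_newF // => xz.
- by apply: Or31; exists u, (val u'); rewrite -arrow_old1.
- by move/arrow_old1_old2: xz => -[k [uk kv]]; apply: Or33; exists u, v', k.
- by apply: Or31; exists u, (o_ k); rewrite -arrow_old1_new.
- by apply: Or32; exists (val v), v'; rewrite -arrow_old2.
- by apply: Or32; exists (i_ j), v'; rewrite -arrow_new_old2.
Qed.

Lemma old2_prec_edge1 v z c j : edge1 z = Some c -> ins_before s2 (val v) = j.+1 ->
  prec (comp_order Heq) (old2 v) z -> prec s1 (o_ j) c.
Proof.
case: z => [[u|v']|k] //= [<-] vj.
  by rewrite prec_old2_old1 vj prec_o_l.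
by rewrite (prec_edge2 (x := old2 v) (y := new k) erefl erefl) prec_i_r ?(valP v) // vj prec_o.
Qed.

Lemma edge2_prec_old1 x a u j : edge2 x = Some a -> outs_before s1 (val u) = j ->
  prec (comp_order Heq) x (old1 u) -> prec s2 a (i_ j).
Proof.
case: x => [[u'|v]|k] //= [<-] uj.
  by rewrite prec_old2_old1 prec_i_r ?(valP v) // uj.
by rewrite (prec_edge1 (x := new k) (y := old1 u) erefl erefl) prec_o_l prec_i uj.
Qed.

Lemma planar_edge1 u y z c : edge1 z = Some c -> arrow (val u) c ->
  prec (comp_order Heq) (old1 u) y -> prec (comp_order Heq) y z ->
  arrow (old1 u) y \/ arrow y z.
Proof.
move=> zc uc xy yz; case yb: (edge1 y) => [b|].
  rewrite (arrow_edge1 (x := old1 u) erefl yb) (arrow_edge1 yb zc).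
  rewrite (prec_edge1 (x := old1 u) erefl yb) in xy; rewrite (prec_edge1 yb zc) in yz.
  by case: (POP_planar s1_POP xy yz uc); [left|right].
case: y yb xy yz => [[//|v]|//] _ xy yz; have [j vj jv] := arrow_prev_i (valP v).
left; apply/arrow_old1_old2; exists j; split => //.
apply: (planar_arrow_via_output s1_POP _ (old2_prec_edge1 zc vj yz) (o_output j) uc).
by rewrite prec_o_r ?(valP u) // -ltnS -vj -prec_old1_old2.
Qed.

Lemma planar_edge2 x y v a : edge2 x = Some a -> arrow a (val v) ->
  prec (comp_order Heq) x y -> prec (comp_order Heq) y (old2 v) ->
  arrow x y \/ arrow y (old2 v).
Proof.
move=> xa av xy yz; case yb: (edge2 y) => [b|].
  rewrite (arrow_edge2 xa yb) (arrow_edge2 (y := old2 v) yb erefl).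
  rewrite (prec_edge2 xa yb) in xy; rewrite (prec_edge2 (y := old2 v) yb erefl) in yz.
  by case: (POP_planar s2_POP xy yz av); [left|right].
case: y yb xy yz => [[u|//]|//] _ xy yz; have [j uj ju] := arrow_next_o (valP u).
right; apply/arrow_old1_old2; exists j; split => //.
apply: (planar_arrow_via_input s2_POP (edge2_prec_old1 xa (esym uj) xy) _ (i_input j) av).
by rewrite prec_i_l uj -prec_old1_old2.
Qed.

Section CrossingArrow.
Variables (u : E1) (v : E2) (k : 'I_n).
Hypotheses (uk : arrow (val u) (o_ k)) (kv : arrow (i_ k) (val v)).

Lemma planar_cross_old1 u' :
  prec (comp_order Heq) (old1 u) (old1 u') -> prec (comp_order Heq) (old1 u') (old2 v) ->
  arrow (old1 u) (old1 u') \/ arrow (old1 u') (old2 v).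
Proof.
rewrite arrow_old1 (prec_edge1 (x := old1 u) (y := old1 u') erefl erefl) => uu' u'v.
case: (leqP (outs_before s1 (val u')) k) => [u'_k | k_u'].
  have u'o : prec s1 (val u') (o_ k) by rewrite prec_o_r ?(valP u').
  case: (POP_planar s1_POP uu' u'o uk) => [|u'k]; first by left.
  by right; apply/arrow_old1_old2; exists k.
have [j u'j u'o] := arrow_next_o (valP u'); right; apply/arrow_old1_old2; exists j; split => //.
apply: (planar_arrow_via_input s2_POP _ _ (i_input j) kv).
  by rewrite prec_i u'j.
by rewrite prec_i_l u'j -prec_old1_old2.
Qed.

Lemma planar_cross_old2 v' :
  prec (comp_order Heq) (old1 u) (old2 v') -> prec (comp_order Heq) (old2 v') (old2 v) ->
  arrow (old1 u) (old2 v') \/ arrow (old2 v') (old2 v).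
Proof.
rewrite arrow_old2 (prec_edge2 (x := old2 v') (y := old2 v) erefl erefl) => uv' v'v.
case: (ltnP k (ins_before s2 (val v'))) => [k_v' | v'_k].
  have kv' : prec s2 (i_ k) (val v') by rewrite prec_i_l.
  case: (POP_planar s2_POP kv' v'v kv) => [kv'_arrow|]; last by right.
  by left; apply/arrow_old1_old2; exists k.
have [j v'j jv'] := arrow_prev_i (valP v'); left; apply/arrow_old1_old2; exists j; split => //.
apply: (planar_arrow_via_output s1_POP _ _ (o_output j) uk).
  by rewrite prec_o_r ?(valP u) // -ltnS -v'j -prec_old1_old2.
by rewrite prec_o -ltnS -v'j.
Qed.

Lemma planar_cross_new j :
  prec (comp_order Heq) (old1 u) (new j) -> prec (comp_order Heq) (new j) (old2 v) ->
  arrow (old1 u) (new j) \/ arrow (new j) (old2 v).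
Proof.
rewrite arrow_old1_new arrow_new_old2 (prec_edge1 (x := old1 u) (y := new j) erefl erefl).
rewrite (prec_edge2 (x := new j) (y := old2 v) erefl erefl) => uj jv.
case: (ltngtP j k) => [j_k | k_j | /val_inj->]; [left | right | by left].
  by apply: (planar_arrow_via_output s1_POP uj _ (o_output j) uk); rewrite prec_o.
by apply: (planar_arrow_via_input s2_POP _ jv (i_input j) kv); rewrite prec_i.
Qed.
End CrossingArrow.

Lemma comp_planar x y z : prec (comp_order Heq) x y -> prec (comp_order Heq) y z ->
  arrow x z -> arrow x y \/ arrow y z.
Proof.
move=> xy yz /arrow_compP[[u [c [xu zc uc]]] | [a [v [xa zv av]]] | [u [v [k [xu zv uk kv]]]]];
  subst.
- exact: planar_edge1 zc uc xy yz.
- exact: planar_edge2 xa av xy yz.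
case: y xy yz => [[u'|v']|j].
- exact: (planar_cross_old1 uk kv (u' := u')).
- exact: (planar_cross_old2 uk kv (v' := v')).
- exact: (planar_cross_new uk kv (j := j)).
Qed.
End Composition.

Theorem theorem2p2 (G1 G2 : graph) (s1 : seq (E G1)) (s2 : seq (E G2))
  (H1 : POP s1) (H2 : POP s2) (Heq : size (outs s1) = size (ins s2)) :
  planar_order (comp_order Heq).
Proof.
split; [split | exact: comp_arrow_prec | exact: comp_planar].
- exact: (pairwise_uniq (fun x => ltnn _) (comp_order_sorted H1 H2 Heq)).
- exact: (comp_order_mem H1 H2 (Heq := Heq)).
Qed.
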